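(* Let $\mathcal{Z}\subset\mathbb{R}^d$, let $\pi$ be a probability distribution on $\mathcal{Z}$, let $\ell:\mathcal{Z}\times\mathcal{Z}\to[0,1]$ be a normalized error function, and let $N$ be the training set size. Let $M$ be a randomized training mechanism mapping datasets in $\mathcal{Z}^N$ to weights $\theta\in\Theta$. For a reconstruction attack $\mathcal{R}:\Theta\to\mathcal{Z}$ define $$TPR_{cum}(\tau)=\mathbb{P}\Big[\min_{Z\in\mathcal{D}_N}\ell(Z,\mathcal{R}(\theta))<\tau\Big]\ \text{with}\ \mathcal{D}_N\sim\pi^{N},\ \theta\sim M(\mathcal{D}_N),$$ $$FPR_{cum}(\tau)=\mathbb{P}\Big[\min_{Z\in\mathcal{D}_N}\ell(Z,\mathcal{R}(\theta))<\tau\Big]\ \text{with}\ \mathcal{D}_N\sim\pi^{N},\ \mathcal{D}_N'\sim\pi^{N}\ \text{independent},\ \theta\sim M(\mathcal{D}_N').$$ Assume there exists $Z_0\in\mathcal{Z}$ such that $\kappa_\tau(Z_0):=\mathbb{P}_{Z\sim\pi}[\ell(Z,Z_0)\le\tau]$ satisfies $0<\kappa_\tau(Z_0)<1$ for every $\tau\in(0,1)$. Define the baseline attack $\mathcal{R}_0(\theta)=Z_0$ for all $\theta$. Then for every $\tau\in(0,1)$, for this attack, $$TPR_{cum}(\tau)\xrightarrow{N\to\infty}1,\qquad FPR_{cum}(\tau)\xrightarrow{N\to\infty}1.$$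
   Context: $\pi^N$ denotes the product distribution (training set of $N$ i.i.d. samples from $\pi$). *)

From HB Require Import structures.
From mathcomp Require Import all_boot all_order all_algebra.
From mathcomp Require Import all_classical all_reals all_analysis.
Set Implicit Arguments. Unset Strict Implicit. Unset Printing Implicit Defensive.
Import Order.TTheory GRing.Theory Num.Theory.
Local Open Scope classical_set_scope.
Local Open Scope ring_scope.

Definition mutually_independent (R : realType) (d : measure_display)
  (Om : measurableType d) (P : probability Om R)
  (d' : measure_display) (T : measurableType d') (I : eqType)
  (X : I -> Om -> T) : Prop :=
  forall (s : seq I), uniq s ->
  forall (A : I -> set T), (forall i, measurable (A i)) ->
  P (\bigcap_(i in [set` s]) (X i @^-1` A i)) =
    (\prod_(i <- s) P (X i @^-1` A i))%E.

(* (X i) for i : nat and (Y i) for i : nat are jointly i.i.d. with law pi: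
   X realizes D_N ~ pi^N (first N coordinates), Y realizes an independent
   D'_N ~ pi^N. *)
Definition iid_pair (R : realType) (d : measure_display)
  (Om : measurableType d) (P : probability Om R)
  (d' : measure_display) (T : measurableType d') (pi : probability T R)
  (X Y : nat -> Om -> T) : Prop :=
  (forall i, measurable_fun setT (X i)) /\
  (forall i, measurable_fun setT (Y i)) /\
  (forall i (A : set T), measurable A -> P (X i @^-1` A) = pi A) /\
  (forall i (A : set T), measurable A -> P (Y i @^-1` A) = pi A) /\
  mutually_independent P
    (fun k : nat + nat => match k with inl i => X i | inr i => Y i end).

(* TPR_cum(tau) = P[ min_{Z in D_N} l(Z, Ratt theta) < tau ],
   D_N = (X 0, ..., X (N-1)) ~ pi^N, theta ~ M N D_N.
   "min < tau" over the finite dataset is written as "some element has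
   error < tau". *)
Definition TPR_cum (R : realType) (d : measure_display)
  (Om : measurableType d) (P : probability Om R)
  (d' : measure_display) (T : measurableType d')
  (d2 : measure_display) (Theta : measurableType d2)
  (X : nat -> Om -> T)
  (M : forall N : nat, ('I_N -> T) -> probability Theta R)
  (Ratt : Theta -> T) (l : T -> T -> R) (N : nat) (tau : R) : \bar R :=
  (\int[P]_w M N (fun i : 'I_N => X i w)
      [set th | exists i : 'I_N, (l (X i w) (Ratt th) < tau)%R])%E.

Definition FPR_cum (R : realType) (d : measure_display)
  (Om : measurableType d) (P : probability Om R)
  (d' : measure_display) (T : measurableType d')
  (d2 : measure_display) (Theta : measurableType d2)
  (X Y : nat -> Om -> T)
  (M : forall N : nat, ('I_N -> T) -> probability Theta R)
  (Ratt : Theta -> T) (l : T -> T -> R) (N : nat) (tau : R) : \bar R :=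
  (\int[P]_w M N (fun i : 'I_N => Y i w)
      [set th | exists i : 'I_N, (l (X i w) (Ratt th) < tau)%R])%E.

Definition kappa (R : realType) (d' : measure_display) (T : measurableType d')
  (pi : probability T R) (l : T -> T -> R) (tau : R) (Z0 : T) : \bar R :=
  pi [set z | l z Z0 <= tau].

(** Under the baseline attack the parameters are never looked at, so both
    rates equal the probability that some training point lies within [tau]
    of [Z0], namely [1 - pi(l(., Z0) >= tau) ^ N] by independence.  Since
    [kappa_(tau/2)(Z0) > 0], the base of this power is [< 1] and it tends
    to [0]. *)
From HB Require Import structures.
From mathcomp Require Import all_boot all_order all_algebra.
From mathcomp Require Import all_classical all_reals all_analysis.
From mathcomp Require Import lra.
Import Order.TTheory GRing.Theory Num.Theory.
Local Open Scope classical_set_scope.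
Local Open Scope ring_scope.

Lemma probability_fineK {R : realType} {d} {T : measurableType d}
    (P : probability T R) {A : set T} :
  measurable A -> P A = (fine (P A))%:E.
Proof. by move=> mA; rewrite fineK // fin_num_measure. Qed.

Lemma cvg_1_sube_expe {R : realType} {x : \bar R} :
  (0 <= x < 1)%E -> (fun N => 1 - x ^+ N)%E @ \oo --> 1%E.
Proof.
case: x => [q| |] /andP[q0 q1] //; rewrite lte_fin in q1.
under eq_fun do rewrite -EFin_expe -EFinB.
apply: cvg_EFin; first by near=> n.
rewrite -[X in _ --> X]subr0; apply: cvgB; first exact: cvg_cst.
by apply: cvg_expr; rewrite ger0_norm // -lee_fin.
Unshelve. all: by end_near.
Qed.

Lemma probability_ge_lt1 {R : realType} {d} {T : measurableType d}
    (P : probability T R) (f : T -> R) (a b : R) :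
  measurable_fun setT f -> a < b ->
  (0 < P [set z | (f z <= a)%R])%E -> (P [set z | (b <= f z)%R] < 1)%E.
Proof.
move=> mf ab Pa_gt0.
have mfge : measurable [set z | b <= f z].
  by rewrite -preimage_itvcy -[_ @^-1` _]setTI; exact: mf.
have mfle : measurable [set z | f z <= a].
  by rewrite -preimage_itvNyc -[_ @^-1` _]setTI; exact: mf.
have : (P [set z | (f z <= a)%R] <= P (~` [set z | (b <= f z)%R]))%E.
  apply: le_measure; rewrite ?inE //; first exact: measurableC.
  by move=> z /= fza; apply/negP; rewrite -ltNge (le_lt_trans fza).
rewrite probability_setC // (probability_fineK P mfge) => /(lt_le_trans Pa_gt0).
by rewrite -EFinD lte_fin subr_gt0.
Qed.

Lemma integral_probability_const_event {R : realType} {d}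
    {Om : measurableType d} (P : probability Om R) {d2} {Theta : measurableType d2}
    (mu : Om -> probability Theta R) (E : set Om) :
  measurable E -> (\int[P]_w mu w [set _ | E w] = P E)%E.
Proof.
move=> mE; rewrite -[E in RHS]setIT -integral_indic //.
apply: eq_integral => w _; rewrite indicE.
have [Ew|nEw] := pselect (E w).
- have -> : [set _ : Theta | E w] = setT by apply/seteqP; split.
  by rewrite mem_set // probability_setT.
- have -> : [set _ : Theta | E w] = set0 by apply/seteqP; split.
  by rewrite memNset // measure0.
Qed.

Lemma set_exists_ord_ltE {Om : Type} {R : realType} (g : nat -> Om -> R)
    (a : R) (N : nat) :
  [set w | exists i : 'I_N, g i w < a] =
    ~` \bigcap_(i in [set i | (i < N)%N]) [set w | a <= g i w].
Proof.
apply/seteqP; split => w /=.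
- by move=> [i gia] /(_ i (ltn_ord i)) /=; rewrite leNgt gia.
- move=> /existsNP[i /not_implyP[iN /negP]].
  by rewrite -ltNge => gia; exists (Ordinal iN).
Qed.

Section iid_sample.
Context {R : realType} {d} {Om : measurableType d} {P : probability Om R}
  {d'} {T : measurableType d'} {law : probability T R} {X Y : nat -> Om -> T}.
Hypothesis XY_iid : iid_pair P law X Y.

Lemma measurable_iid_bigcap_preimage {A : set T} (N : nat) :
  measurable A -> measurable (\bigcap_(i in [set i | (i < N)%N]) X i @^-1` A).
Proof.
have [mX _] := XY_iid.
move=> mA; apply: bigcap_measurableType => i _.
by rewrite -[_ @^-1` _]setTI; exact: mX.
Qed.

Lemma iid_bigcap_preimage (A : set T) (N : nat) : measurable A ->
  P (\bigcap_(i in [set i | (i < N)%N]) X i @^-1` A) = (law A ^+ N)%E.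
Proof.
have [_ [_ [Xlaw [_ XY_indep]]]] := XY_iid.
move=> mA; have inl_inj : injective (@inl nat nat) by move=> a b [].
have := XY_indep (map inl (iota 0 N)) _ (fun _ => A) (fun _ => mA).
rewrite map_inj_uniq // iota_uniq => /(_ isT).
have -> : \bigcap_(i in [set i | (i < N)%N]) X i @^-1` A =
    \bigcap_(k in [set` map inl (iota 0 N)])
      ((match k with inl i => X i | inr i => Y i end) @^-1` A).
  apply/seteqP; split => w /=.
  - move=> XA [i|i] /=; last by move=> /mapP[].
    by rewrite mem_map // mem_iota add0n; exact: XA.
  - by move=> XA i iN; apply: (XA (inl i)); rewrite /= mem_map // mem_iota.
move=> ->; rewrite big_map.
under eq_bigr => i _ do rewrite Xlaw //.
rewrite (probability_fineK law mA) -EFin_expe prodEFin; congr EFin.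
by rewrite -[in LHS](subn0 N) -/(index_iota 0 N) prodr_const_nat subn0.
Qed.

End iid_sample.

Lemma baseline_rateE {R : realType} {d} {Om : measurableType d}
    {P : probability Om R} {d'} {T : measurableType d'} {law : probability T R}
    {d2} {Theta : measurableType d2} {l : T -> T -> R} {Z0 : T}
    {X Y : nat -> Om -> T} (N : nat) (mu : Om -> probability Theta R) (tau : R) :
  measurable_fun setT (fun z => l z Z0) -> iid_pair P law X Y ->
  (\int[P]_w mu w [set _ : Theta | exists i : 'I_N, (l (X i w) Z0 < tau)%R] =
    1 - law [set z | (tau <= l z Z0)%R] ^+ N)%E.
Proof.
move=> ml XY_iid.
have mA : measurable [set z | (tau <= l z Z0)%R].
  by rewrite -preimage_itvcy -[_ @^-1` _]setTI; exact: ml.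
have EE := set_exists_ord_ltE (fun i w => l (X i w) Z0) tau N.
have mE := measurable_iid_bigcap_preimage XY_iid N mA.
rewrite (integral_probability_const_event P mu
  [set w | exists i : 'I_N, (l (X i w) Z0 < tau)%R]).
  by rewrite EE probability_setC // (iid_bigcap_preimage XY_iid _ N mA).
by rewrite EE; exact: measurableC.
Qed.

Theorem lemma1 (R : realType)
  (d : measure_display) (Om : measurableType d) (P : probability Om R)
  (d' : measure_display) (T : measurableType d') (pi : probability T R)
  (d2 : measure_display) (Theta : measurableType d2)
  (l : T -> T -> R)
  (hl01 : forall z z' : T, 0 <= l z z' <= 1)
  (hlmeas : forall z0 : T, measurable_fun setT (fun z => l z z0))
  (M : forall N : nat, ('I_N -> T) -> probability Theta R)
  (X Y : nat -> Om -> T) (hiid : iid_pair P pi X Y)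
  (Z0 : T)
  (hZ0 : forall tau : R, 0 < tau < 1 ->
          (0 < kappa pi l tau Z0)%E /\ (kappa pi l tau Z0 < 1)%E) :
  forall tau : R, 0 < tau < 1 ->
    ((fun N => TPR_cum P X M (fun _ : Theta => Z0) l N tau) @ \oo --> 1%E) /\
    ((fun N => FPR_cum P X Y M (fun _ : Theta => Z0) l N tau) @ \oo --> 1%E).
Proof.
move=> tau /andP[tau_gt0 tau_lt1].
have half_tau : 0 < tau / 2 < 1 by apply/andP; split; lra.
have [kappa_gt0 _] := hZ0 _ half_tau.
have pi_lt1 : (pi [set z | (tau <= l z Z0)%R] < 1)%E.
  by apply: probability_ge_lt1 kappa_gt0 => //; lra.
have rate_cvg :=
  cvg_1_sube_expe (introT andP (conj (measure_ge0 pi _) pi_lt1)).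
split; apply: cvg_trans rate_cvg; apply: near_eq_cvg; near=> N.
- by rewrite /TPR_cum (baseline_rateE _ _ _ (hlmeas Z0) hiid).
- by rewrite /FPR_cum (baseline_rateE _ _ _ (hlmeas Z0) hiid).
Unshelve. all: by end_near.
Qed.
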